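(* Let $P$ and $Q$ be lattice paths from $(0,0)$ to $(m,r)$ with $P$ never going above $Q$. Then the dimension of the lattice path matroid polytope $\mathcal{P}(M[P,Q])$ is $m+r-k+1$, where $k$ is the number of intersection points (common lattice points) of $P$ and $Q$.
   Context: Lattice paths use steps $E=(1,0)$ and $N=(0,1)$ and are written as words $p_1p_2\cdots p_{m+r}$ in $E,N$. For lattice paths $P,Q$ from $(0,0)$ to $(m,r)$ with $P$ never above $Q$, let $u_1<\dots<u_r$ be the positions of the North steps of $P$ and $l_1<\dots<l_r$ those of $Q$; $M[P,Q]$ is the transversal matroid on ground set $[m+r]$ with presentation $\{[l_i,u_i]: i\in[r]\}$. Equivalently, an $r$-subset $B\subseteq[m+r]$ is a basis iff the lattice path having North steps exactly at the positions in $B$ (East steps elsewhere) stays in the region bounded by $P$ and $Q$. The lattice path matroid polytope is $\mathcal{P}(M[P,Q])=\mathrm{conv}\{e_B : B \text{ a basis}\}\subseteq\mathbb{R}^{m+r}$, where $e_B=\sum_{b\in B}e_b$ and $e_i$ are the standard basis vectors. *)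

From HB Require Import structures.
From mathcomp Require Import all_boot all_order all_algebra.
Set Implicit Arguments. Unset Strict Implicit. Unset Printing Implicit Defensive.
Import Order.TTheory GRing.Theory Num.Theory.
Local Open Scope ring_scope.

(* A lattice path from (0,0) to (m,r) with steps E,N is a word p_1...p_(m+r);
   we encode it by the set S of positions of its North steps, positions being
   numbered 0,...,m+r-1 (i.e. position i+1 of the paper is i here). *)

Definition height (n : nat) (S : {set 'I_n}) (t : nat) : nat :=
  #|[set i in S | (i < t)%N]|.

Definition is_path (m r : nat) (S : {set 'I_(m + r)}) : Prop := #|S| = r.

Definition path_point (n : nat) (S : {set 'I_n}) (t : nat) : nat * nat :=
  ((t - height S t)%N, height S t).

Definition path_points (n : nat) (S : {set 'I_n}) : seq (nat * nat) :=
  [seq path_point S t | t <- iota 0 n.+1].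

(* P never goes above Q : after any number t of steps, P has made at most as
   many North steps as Q (both being on the antidiagonal x + y = t). *)
Definition never_above (n : nat) (P Q : {set 'I_n}) : Prop :=
  forall t, (t <= n)%N -> (height P t <= height Q t)%N.

Definition num_intersections (n : nat) (P Q : {set 'I_n}) : nat :=
  count (fun p => p \in path_points Q) (path_points P).

(* B is a basis of M[P,Q]: the lattice path with North steps exactly at B
   stays in the region bounded by P and Q. *)
Definition lpm_basis (m r : nat) (P Q B : {set 'I_(m + r)}) : bool :=
  (#|B| == r) && [forall t : 'I_(m + r).+1,
     (height P t <= height B t)%N && (height B t <= height Q t)%N].

Definition indvec (R : nzRingType) (n : nat) (B : {set 'I_n}) : 'rV[R]_n :=
  \row_i (if i \in B then 1 else 0).

Definition conv (R : realFieldType) (n : nat) (S : seq 'rV[R]_n) (x : 'rV[R]_n)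
  : Prop :=
  exists w : 'I_(size S) -> R,
    (forall i, 0 <= w i) /\ \sum_i w i = 1 /\
    x = \sum_i w i *: S`_i.

Definition lpm_polytope (R : realFieldType) (m r : nat) (P Q : {set 'I_(m + r)})
  : 'rV[R]_(m + r) -> Prop :=
  conv [seq indvec R B | B <- enum [set B | lpm_basis P Q B]].

Definition aff_indep (R : fieldType) (n k : nat) (p : 'I_k.+1 -> 'rV[R]_n) : bool :=
  row_free (\matrix_(i < k) (p (lift ord0 i) - p ord0)).

Definition has_dim (R : fieldType) (n : nat) (A : 'rV[R]_n -> Prop) (d : nat) : Prop :=
  (exists p : 'I_d.+1 -> 'rV[R]_n, (forall i, A (p i)) /\ aff_indep p) /\
  (forall p : 'I_d.+2 -> 'rV[R]_n, (forall i, A (p i)) -> ~~ aff_indep p).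

Arguments lpm_polytope R {m r} P Q _.

From HB Require Import structures.
From mathcomp Require Import all_boot all_order all_algebra.
From mathcomp Require Import zify.
Set Implicit Arguments. Unset Strict Implicit. Unset Printing Implicit Defensive.
Import Order.TTheory GRing.Theory Num.Theory.

(* A basis B is a lattice path squeezed between P and Q, so at each of the
   k - 1 positive times t where P and Q meet, every vertex e_B has prefix sum
   height P t.  Hence the polytope lies in a translate of the kernel of these
   k - 1 prefix-sum functionals, which is spanned by the vectors e_i - e_(i+1)
   with i + 1 not a meeting time and has dimension m + r - (k - 1).
   Conversely each such e_i - e_(i+1) is the difference of two vertices:
   clamp between P and Q two staircases that differ only in whether they
   climb at step i or at step i + 1. *)

Definition unit_step (f : nat -> nat) := forall t, f t <= f t.+1 <= (f t).+1.

Section Height.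

Variables (n : nat) (S : {set 'I_n}).

Lemma height0 : height S 0 = 0.
Proof. by apply: eq_card0 => i; rewrite inE ltn0 andbF. Qed.

Lemma heightS_ord (i : 'I_n) : height S i.+1 = height S i + (i \in S).
Proof.
have ltSE (j : 'I_n) : (j < i.+1) = (j == i) || (j < i) by rewrite ltnS leq_eqVlt -val_eqE.
rewrite /height addnC; case: (boolP (i \in S)) => iS.
  rewrite (_ : [set j in S | j < i.+1] = i |: [set j in S | j < i]).
    by rewrite cardsU1 inE ltnn andbF.
  by apply/setP => j; rewrite !inE ltSE; case: eqVneq => [->|] //=; rewrite andbT.
rewrite add0n; apply: eq_card => j.
by rewrite !inE ltSE; case: eqVneq => [->|] //=; rewrite (negbTE iS).
Qed.

Lemma height_card t : n <= t -> height S t = #|S|.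
Proof. by move=> le_nt; apply: eq_card => i; rewrite inE (leq_trans (ltn_ord i)) ?andbT. Qed.

Lemma unit_step_height : unit_step (height S).
Proof.
move=> t; case: (ltnP t n) => [lt_tn|le_nt].
  by rewrite -[t]/(val (Ordinal lt_tn)) heightS_ord leq_addr addnC -add1n leq_add2r leq_b1.
by rewrite !height_card ?leqnn ?leqnSn ?(leqW le_nt).
Qed.

Lemma height_leq t : height S t <= t.
Proof. by elim: t => [|t IHt]; rewrite ?height0 //; have := unit_step_height t; lia. Qed.

End Height.

Definition clamp (a b f : nat -> nat) (t : nat) := maxn (a t) (minn (b t) (f t)).

Lemma unit_step_clamp a b f :
  unit_step a -> unit_step b -> unit_step f -> unit_step (clamp a b f).
Proof. by move=> sa sb sf t; have := sa t; have := sb t; have := sf t; rewrite /clamp; lia. Qed.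

Definition jumps n (g : nat -> nat) : {set 'I_n} := [set i : 'I_n | g i.+1 == (g i).+1].

Lemma height_jumps n g t : g 0 = 0 -> unit_step g -> t <= n -> height (jumps n g) t = g t.
Proof.
move=> g0 sg; elim: t => [|t IHt] le_tn; first by rewrite height0.
rewrite -[t]/(val (Ordinal le_tn)) heightS_ord IHt ?(ltnW le_tn) // inE /=.
by have := sg t; case: eqP; lia.
Qed.

Local Open Scope ring_scope.

(* [evec R n k] is the zero row when [n <= k]. *)
Definition evec (R : nzRingType) n (k : nat) : 'rV[R]_n := \row_(l < n) (val l == k)%:R.

Lemma indvec_jumps_bump (R : nzRingType) n (g1 g2 : nat -> nat) (i c : nat) :
  g1 i = c -> g1 i.+1 = c -> g1 i.+2 = c.+1 -> g2 i.+1 = c.+1 ->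
  (forall t, t != i.+1 -> g2 t = g1 t) ->
  indvec R (jumps n g2) - indvec R (jumps n g1) = evec R n i - evec R n i.+1.
Proof.
move=> g1i g1i1 g1i2 g2i1 g2E; apply/rowP => -[l lt_ln]; rewrite !mxE !inE /=.
have ne_S k : (k == k.+1) = false by rewrite ltn_eqF.
have ne_SS k : (k.+2 == k.+1) = false by rewrite gtn_eqF.
have [->|ne_li] := eqVneq l i.
  by rewrite (g2E i) ?ne_S // g1i g1i1 g2i1 !eqxx ne_S subr0.
have [->|ne_lSi] := eqVneq l i.+1.
  by rewrite (g2E i.+2) ?ne_SS // g1i1 g1i2 g2i1 eqxx ne_S sub0r.
by rewrite !g2E ?eqSS // !subrr.
Qed.

Section LatticePathBases.

Variables (m r : nat) (P Q : {set 'I_(m + r)}).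
Hypotheses (pathP : is_path P) (pathQ : is_path Q) (P_below_Q : never_above P Q).

Lemma lpm_basis_lower : lpm_basis P Q P.
Proof.
apply/andP; split; first exact/eqP.
by apply/forallP => t; rewrite leqnn P_below_Q // -ltnS.
Qed.

Lemma lpm_basis_clamp f :
  unit_step f -> lpm_basis P Q (jumps (m + r) (clamp (height P) (height Q) f)).
Proof.
move=> sf; have sg := unit_step_clamp (unit_step_height P) (unit_step_height Q) sf.
have g0 : clamp (height P) (height Q) f 0 = 0 by rewrite /clamp !height0 min0n.
apply/andP; split.
  rewrite -(height_card _ (leqnn _)) height_jumps // /clamp !height_card //.
  by rewrite pathP pathQ; apply/eqP; lia.
apply/forallP => t; have le_t : (t <= m + r)%N by rewrite -ltnS.
by rewrite height_jumps // /clamp; have := P_below_Q le_t; lia.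
Qed.

Lemma lpm_basis_swap (R : nzRingType) i : (height P i.+1 < height Q i.+1)%N ->
  exists B1 B2, [/\ lpm_basis P Q B1, lpm_basis P Q B2 &
    indvec R B2 - indvec R B1 = evec R (m + r) i - evec R (m + r) i.+1].
Proof.
move=> lt_PQ; set c := height P i.+1.
(* Clamped, [f1] and [f2] stay at height [c] up to times [i] and [i+1]
   respectively and climb right after, because [P] is at height [c] and [Q]
   strictly above it at time [i+1]. *)
pose f1 t := (c + (t - i.+1))%N; pose f2 t := (f1 t + (t == i.+1))%N.
have sf1 : unit_step f1 by move=> t; rewrite /f1; lia.
have sf2 : unit_step f2 by move=> t; rewrite /f2 /f1; lia.
exists (jumps _ (clamp (height P) (height Q) f1)), (jumps _ (clamp (height P) (height Q) f2)).
split; try exact: lpm_basis_clamp.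
have := unit_step_height P i; have := unit_step_height P i.+1.
have := unit_step_height Q i; have := unit_step_height Q i.+1 => sQ1 sQ sP1 sP.
by apply: (@indvec_jumps_bump _ _ _ _ i c); rewrite /clamp /f2 /f1 -/c; lia.
Qed.

End LatticePathBases.

Section PrefixSum.

Variables (R : nzRingType) (n : nat).

Definition prefix_sum (v : 'rV[R]_n) (t : nat) : R := \sum_(j < n | (j < t)%N) v 0 j.

Lemma prefix_sum0 v : prefix_sum v 0 = 0.
Proof. by rewrite /prefix_sum big_pred0. Qed.

Lemma prefix_sumS_ord v (l : 'I_n) : prefix_sum v l.+1 = prefix_sum v l + v 0 l.
Proof.
rewrite /prefix_sum (bigD1 l) ?ltnSn //= addrC; congr (_ + _); apply: eq_bigl => j.
by rewrite ltnS leq_eqVlt -val_eqE; case: eqVneq => [->|] /=; rewrite ?ltnn ?andbT.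
Qed.

Lemma prefix_sum_indvec (S : {set 'I_n}) t : prefix_sum (indvec R S) t = (height S t)%:R.
Proof.
rewrite /prefix_sum /height -sum1_card natr_sum big_mkcond [RHS]big_mkcond.
by apply: eq_bigr => j _; rewrite !mxE inE; case: (j \in S); case: (j < t)%N.
Qed.

Lemma prefix_sum_telescope v :
  v = \sum_(i < n) prefix_sum v i.+1 *: (evec R n i - evec R n i.+1).
Proof.
apply/rowP => l; rewrite summxE.
under eq_bigr => i _ do rewrite !mxE mulrBr !mulr_natr !mulrb ![\val l == _]eq_sym.
have shifted : \sum_(i < n | i.+1 == l :> nat) prefix_sum v i.+1 = prefix_sum v l.
  case: l => -[|l] lt_ln /=; first by rewrite big_pred0 ?prefix_sum0.
  under eq_bigl do rewrite eqSS.
  by rewrite (@big_ord1_eq _ _ _ (fun j => prefix_sum v j.+1)) ltnW.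
rewrite sumrB -!big_mkcond (@big_ord1_eq _ _ _ (fun j => prefix_sum v j.+1)) ltn_ord.
by rewrite shifted prefix_sumS_ord addrC addKr.
Qed.

End PrefixSum.

Lemma prefix_sum_eq0_sub (R : fieldType) n (T : pred nat) k (M : 'M[R]_(k, n))
    (v : 'rV[R]_n) :
  T n -> (forall t, (t <= n)%N -> T t -> prefix_sum v t = 0) ->
  (forall i, (i.+1 < n)%N -> ~~ T i.+1 -> (evec R n i - evec R n i.+1 <= M)%MS) ->
  (v <= M)%MS.
Proof.
move=> Tn v_T sub_M; rewrite (prefix_sum_telescope v); apply/summx_sub => i _.
have [/andP[lt_Si_n nT_Si]|] := boolP ((i.+1 < n)%N && ~~ T i.+1).
  exact/scalemx_sub/sub_M.
rewrite negb_and negbK -leqNgt => T_Si.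
have {}T_Si : T i.+1.
  case/orP: T_Si => // le_n_Si.
  by rewrite (_ : i.+1 = n) //; apply/eqP; rewrite eqn_leq le_n_Si ltn_ord.
by rewrite v_T ?scale0r ?sub0mx.
Qed.

Section TightTimes.

Variables (n : nat) (P Q : {set 'I_n}).

Definition tight (t : nat) := height P t == height Q t.

Definition tight_times := [seq t <- iota 1 n | tight t].

Definition free_steps := [seq i <- iota 0 n | (i.+1 < n)%N && ~~ tight i.+1].

Lemma mem_tight_times t : (t \in tight_times) = (0 < t <= n)%N && tight t.
Proof. by rewrite mem_filter mem_iota add1n ltnS andbC. Qed.

Lemma size_free_tight : (size free_steps + size tight_times <= n)%N.
Proof.
rewrite !size_filter -[1%N]/(1 + 0)%N iotaDl count_map -count_predUI.
rewrite (@eq_count _ (predI _ _) pred0) => [|i /=]; last first.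
  by rewrite add1n; case: (tight i.+1); rewrite ?andbF.
by rewrite count_pred0 addn0 (leq_trans (count_size _ _)) ?size_iota.
Qed.

Hypothesis card_PQ : #|P| = #|Q|.

Lemma tight_n : tight n.
Proof. by rewrite /tight !height_card ?card_PQ. Qed.

End TightTimes.

Definition tight_mx (R : nzRingType) n (P Q : {set 'I_n}) :
  'M[R]_(n, size (tight_times P Q)) :=
  \matrix_(l, j) (l < nth 0 (tight_times P Q) j)%N%:R.

Definition free_mx (R : nzRingType) n (P Q : {set 'I_n}) :
  'M[R]_(size (free_steps P Q), n) :=
  \matrix_j (evec R n (nth 0 (free_steps P Q) j) - evec R n (nth 0 (free_steps P Q) j).+1).

Section TightMatrices.

Variables (n : nat) (P Q : {set 'I_n}).

Lemma tight_mxE (R : nzRingType) (v : 'rV[R]_n) j :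
  (v *m tight_mx R P Q) 0 j = prefix_sum v (nth 0 (tight_times P Q) j).
Proof.
rewrite mxE [RHS]big_mkcond; apply: eq_bigr => l _.
by rewrite mxE; case: ifP; rewrite ?mulr1 ?mulr0.
Qed.

Lemma tight_mx_eq0 (R : nzRingType) (v : 'rV[R]_n) :
  v *m tight_mx R P Q = 0 -> forall t, (t <= n)%N -> tight P Q t -> prefix_sum v t = 0.
Proof.
move=> vC0 [|t] le_tn tight_t; first exact: prefix_sum0.
have t_tight : t.+1 \in tight_times P Q by rewrite mem_tight_times le_tn.
have j_lt : (index t.+1 (tight_times P Q) < size (tight_times P Q))%N by rewrite index_mem.
by rewrite -(nth_index 0 t_tight) -[index _ _]/(val (Ordinal j_lt)) -tight_mxE vC0 mxE.
Qed.

Lemma evec_sub_free_mx (R : fieldType) i :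
  (i.+1 < n)%N -> ~~ tight P Q i.+1 -> (evec R n i - evec R n i.+1 <= free_mx R P Q)%MS.
Proof.
move=> lt_Si_n loose; have i_free : i \in free_steps P Q.
  by rewrite mem_filter lt_Si_n loose mem_iota add0n (ltnW lt_Si_n).
have := row_sub (Ordinal (etrans (index_mem _ _) i_free)) (free_mx R P Q).
by rewrite rowK /= nth_index.
Qed.

Hypothesis card_PQ : #|P| = #|Q|.

Lemma ker_tight_mx_sub (R : fieldType) (v : 'rV[R]_n) :
  v *m tight_mx R P Q = 0 -> (v <= free_mx R P Q)%MS.
Proof.
move=> vC0; apply: (prefix_sum_eq0_sub (tight_n card_PQ) (tight_mx_eq0 vC0)).
exact: evec_sub_free_mx.
Qed.

Lemma rank_free_mx (R : fieldType) : \rank (free_mx R P Q) = (n - size (tight_times P Q))%N.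
Proof.
apply/eqP; rewrite eqn_leq; apply/andP; split.
  by have := rank_leq_row (free_mx R P Q); have := size_free_tight P Q; lia.
have ker_sub : (kermx (tight_mx R P Q) <= free_mx R P Q)%MS.
  by apply/row_subP => i; apply: ker_tight_mx_sub; rewrite -row_mul mulmx_ker row0.
by have := mxrankS ker_sub; rewrite mxrank_ker; have := rank_leq_col (tight_mx R P Q); lia.
Qed.

End TightMatrices.

Lemma conv_mem (R : realFieldType) n (s : seq 'rV[R]_n) y : y \in s -> conv s y.
Proof.
move=> s_y; have k_lt : (index y s < size s)%N by rewrite index_mem.
exists (fun i => (i == Ordinal k_lt)%:R); split=> [i|]; first exact: ler0n.
split; rewrite (bigD1 (Ordinal k_lt)) //= eqxx ?scale1r ?nth_index //.
  by rewrite big1 ?addr0 // => i /negbTE->.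
by rewrite big1 ?addr0 // => i /negbTE->; rewrite scale0r.
Qed.

Lemma conv_mulmx_eq (R : realFieldType) n p (s : seq 'rV[R]_n) (C : 'M[R]_(n, p)) c x :
  (forall y, y \in s -> y *m C = c) -> conv s x -> x *m C = c.
Proof.
move=> sC [w [_ [w1 ->]]]; rewrite mulmx_suml.
under eq_bigr => i _ do rewrite -scalemxAl sC ?mem_nth //.
by rewrite -scaler_suml w1 scale1r.
Qed.

Definition diff_mx (R : nzRingType) n (s : seq 'rV[R]_n) (x0 : 'rV[R]_n) :
  'M[R]_(size s, n) := \matrix_(k < size s) (s`_k - x0).

Lemma diff_mx_sub (R : fieldType) n (s : seq 'rV[R]_n) x0 y :
  y \in s -> (y - x0 <= diff_mx s x0)%MS.
Proof.
move=> s_y; have k_lt : (index y s < size s)%N by rewrite index_mem.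
by have := row_sub (Ordinal k_lt) (diff_mx s x0); rewrite rowK /= nth_index.
Qed.

Lemma has_dim_rank (R : fieldType) n (A : 'rV[R]_n -> Prop) (s : seq 'rV[R]_n) x0 p
    (U : 'M[R]_(p, n)) :
  A x0 -> (forall y, y \in s -> A y) -> (forall x y, A x -> A y -> (x - y <= U)%MS) ->
  (U <= diff_mx s x0)%MS -> has_dim A (\rank U).
Proof.
move=> A_x0 A_s A_U U_D; set D := diff_mx s x0.
have rankD : \rank D = \rank U.
  apply/eqP; rewrite eqn_leq (mxrankS U_D) andbT; apply/mxrankS/row_subP => k.
  by rewrite rowK; apply: A_U A_x0; apply/A_s/mem_nth.
split=> [|q A_q]; last first.
  rewrite /aff_indep -row_leq_rank -ltnNge ltnS.
  by apply/mxrankS/row_subP => i; rewrite rowK; apply: A_U.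
pose f := maxrankfun D.
exists (fun j => if unlift ord0 j is Some i then s`_(f (cast_ord (esym rankD) i)) else x0).
split=> [j|]; first by case: unlift => [i|] //; apply/A_s/mem_nth.
rewrite /aff_indep -row_leq_rank; set M := \matrix_(i < _) _.
have sub_M : (rowsub f D <= M)%MS.
  apply/row_subP => i; have := row_sub (cast_ord rankD i) M.
  by rewrite row_rowsub !rowK liftK unlift_none cast_ordK.
by have := mxrankS sub_M; rewrite (eqP (maxrowsub_free D)) rankD.
Qed.

Section LatticePathPolytope.

Variables (R : realFieldType) (m r : nat) (P Q : {set 'I_(m + r)}).
Hypotheses (pathP : is_path P) (pathQ : is_path Q) (P_below_Q : never_above P Q).

Definition lpm_vertices := [seq indvec R B | B <- enum [set B | lpm_basis P Q B]].

Lemma indvec_lpm_vertices B : lpm_basis P Q B -> indvec R B \in lpm_vertices.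
Proof. by move=> PQ_B; apply: map_f; rewrite mem_enum inE. Qed.

Lemma indvec_tight_mx B :
  lpm_basis P Q B -> indvec R B *m tight_mx R P Q = indvec R P *m tight_mx R P Q.
Proof.
case/andP=> _ /forallP B_between; apply/rowP => j; rewrite !tight_mxE !prefix_sum_indvec.
set t := nth 0 _ _; have : t \in tight_times P Q by apply: mem_nth.
rewrite mem_tight_times => /andP[/andP[_ le_t] /eqP tight_t].
have /andP[] := B_between (Ordinal (le_t : (t < (m + r).+1)%N)).
by rewrite /= tight_t => ? ?; congr _%:R; apply/eqP; rewrite eqn_leq; apply/andP.
Qed.

Lemma lpm_polytope_sub_free_mx x y :
  lpm_polytope R P Q x -> lpm_polytope R P Q y -> (x - y <= free_mx R P Q)%MS.
Proof.
have vC z : z \in lpm_vertices -> z *m tight_mx R P Q = indvec R P *m tight_mx R P Q.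
  by case/mapP => B; rewrite mem_enum inE => /indvec_tight_mx + ->.
move=> Px Py; apply: ker_tight_mx_sub; first by rewrite pathP pathQ.
by rewrite mulmxBl (conv_mulmx_eq vC Px) (conv_mulmx_eq vC Py) subrr.
Qed.

Lemma free_mx_sub_diff_mx : (free_mx R P Q <= diff_mx lpm_vertices (indvec R P))%MS.
Proof.
apply/row_subP => j; rewrite rowK; set i := nth 0 _ j.
have : i \in free_steps P Q by apply: mem_nth.
rewrite mem_filter => /andP[/andP[lt_Si_n loose] _].
have lt_PQ : (height P i.+1 < height Q i.+1)%N.
  by rewrite ltn_neqAle loose P_below_Q // ltnW.
have [B1 [B2 [B1_basis B2_basis <-]]] := lpm_basis_swap pathP pathQ P_below_Q R lt_PQ.
rewrite -[_ - _](subrKA (indvec R P)); apply: addmx_sub.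
  by apply: diff_mx_sub; apply: indvec_lpm_vertices.
by rewrite -opprB eqmx_opp; apply: diff_mx_sub; apply: indvec_lpm_vertices.
Qed.

End LatticePathPolytope.

Local Close Scope ring_scope.

Lemma num_intersectionsE n (P Q : {set 'I_n}) :
  num_intersections P Q = (size (tight_times P Q)).+1.
Proof.
rewrite /num_intersections /path_points count_map (@eq_in_count _ _ (tight P Q)).
  by rewrite size_filter /= /tight !height0.
move=> t t_in; apply/mapP/idP => [[t' _ [e1 e2]]|tight_t].
  have et : t = t' by have := height_leq P t; have := height_leq Q t'; lia.
  by rewrite /tight e2 et.
by exists t; rewrite // /path_point (eqP tight_t).
Qed.

Unset Implicit Arguments.

Theorem corollary3p4 (R : realFieldType) (m r : nat) (P Q : {set 'I_(m + r)}) :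
  is_path P -> is_path Q -> never_above P Q ->
  has_dim (lpm_polytope R P Q) (m + r + 1 - num_intersections P Q).
Proof.
move=> pathP pathQ P_below_Q.
have card_PQ : #|P| = #|Q| by rewrite pathP pathQ.
rewrite num_intersectionsE addn1 subSS -(rank_free_mx card_PQ R).
apply: (has_dim_rank (s := lpm_vertices R P Q) (x0 := indvec R P)).
- by apply: conv_mem; apply: indvec_lpm_vertices; apply: lpm_basis_lower.
- exact: conv_mem.
- exact: lpm_polytope_sub_free_mx.
- exact: free_mx_sub_diff_mx.
Qed.
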